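(* Let $\mathcal{P}$ be a finite corpus of programs, let $S$ be the (finite) set of complete abstractions whose size does not exceed the size of the largest program in $\mathcal{P}$, and let $U$ be any real-valued utility function on complete abstractions. Run the naïve top-down search over $S$ augmented with strict dominance pruning, i.e. at any step the search may discard a popped partial abstraction $\hat A'$ instead of expanding it, provided that there exists some partial abstraction $\hat A''$ that strictly dominates $\hat A'$ (whether or not $\hat A''$ has itself been enumerated or pruned). Then the search finds an optimal abstraction, i.e. a complete abstraction $A^\ast\in S$ with $U(A^\ast)\ge U(A)$ for all $A\in S$.
   Context: Programs are closed untyped lambda-calculus terms with de Bruijn indices: $e ::= \lambda.\,e \mid (e\ e) \mid \$i \mid t$, where $\$i$ refers to the variable bound by the $i$-th closest enclosing $\lambda$ and $t$ ranges over a fixed set of primitive symbols. A (complete) abstraction is a term of the grammar $A ::= \lambda.\,A \mid (A\ A) \mid \$i \mid t \mid \alpha$, where $\alpha,\beta,\dots$ are abstraction variables (it represents the body of a function taking the abstraction variables as arguments). A partial abstraction additionally may contain holes $??$: $\hat A ::= A \mid ?? \mid \lambda.\,\hat A \mid (\hat A\ \hat A)$, each hole carrying a unique index. An expansion $\hat A\to\hat A'$ replaces one hole of $\hat A$ by one production of the partial-abstraction grammar ($\lambda.\,??$, $(??\ ??)$ with fresh holes, some $\$i$, some primitive $t$, or an abstraction variable, new or already present). $\hat A\to^\ast A$ (''$A$ is derivable from $\hat A$'') denotes the reflexive–transitive closure of expansion; every abstraction is derivable from $??$. The naïve search keeps a queue initialized with the single partial abstraction $??$; at each step it pops a partial abstraction,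 chooses a hole, and expands it in every possible way, pushing resulting partial abstractions onto the queue and, for resulting complete abstractions, computing their utility and updating the best abstraction found so far; it never produces abstractions larger than the largest program in $\mathcal{P}$, so without pruning it enumerates each element of $S$ exactly once. A complete abstraction $A''$ covers a complete abstraction $A'$ if $U(A'')>U(A')$. A partial abstraction $\hat A''$ strictly dominates a partial abstraction $\hat A'$ if for every complete $A'$ with $\hat A'\to^\ast A'$ there exists a complete $A''$ with $\hat A''\to^\ast A''$ such that $A''$ covers $A'$ (abstractions ranging over $S$). *)

From mathcomp Require Import all_boot all_order all_algebra.
From mathcomp Require Import reals.

Set Implicit Arguments.
Unset Strict Implicit.
Unset Printing Implicit Defensive.

Import Order.TTheory GRing.Theory Num.Theory.

Section Defs.
Variable T : finType. (* the fixed (finite) set of primitive symbols *)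

(** Programs: untyped lambda terms with de Bruijn indices and primitives. *)
Inductive term : Type :=
| TLam : term -> term
| TApp : term -> term -> term
| TVar : nat -> term
| TPrim : T -> term.

Fixpoint tsize (e : term) : nat :=
  match e with
  | TLam b => (tsize b).+1
  | TApp a b => (tsize a + tsize b).+1
  | TVar _ => 1
  | TPrim _ => 1
  end.

(* every $i refers to an enclosing lambda (d = number of enclosing lambdas) *)
Fixpoint tscoped (d : nat) (e : term) : bool :=
  match e with
  | TLam b => tscoped d.+1 b
  | TApp a b => tscoped d a && tscoped d b
  | TVar i => i < d
  | TPrim _ => true
  end.

Definition tclosed (e : term) : bool := tscoped 0 e.

(** Partial abstractions: complete abstractions plus holes ??.
    Abstraction variables alpha, beta, ... are PAVar 0, PAVar 1, ... *)
Inductive pabs : Type :=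
| PHole : pabs
| PLam : pabs -> pabs
| PApp : pabs -> pabs -> pabs
| PVar : nat -> pabs
| PPrim : T -> pabs
| PAVar : nat -> pabs.

Fixpoint psize (A : pabs) : nat :=
  match A with
  | PLam b => (psize b).+1
  | PApp a b => (psize a + psize b).+1
  | _ => 1
  end.

Fixpoint complete (A : pabs) : bool :=
  match A with
  | PHole => false
  | PLam b => complete b
  | PApp a b => complete a && complete b
  | _ => true
  end.

Fixpoint pscoped (d : nat) (A : pabs) : bool :=
  match A with
  | PLam b => pscoped d.+1 b
  | PApp a b => pscoped d a && pscoped d b
  | PVar i => i < d
  | _ => true
  end.

(* number of abstraction variables in use: 1 + largest index (0 if none);
   the "new" abstraction variable is PAVar (nvars A) *)
Fixpoint nvars (A : pabs) : nat :=
  match A with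
  | PLam b => nvars b
  | PApp a b => maxn (nvars a) (nvars b)
  | PAVar k => k.+1
  | _ => 0
  end.

Fixpoint avars (A : pabs) : seq nat :=
  match A with
  | PLam b => avars b
  | PApp a b => avars a ++ avars b
  | PAVar k => [:: k]
  | _ => [::]
  end.

(* canonical naming: variables are introduced in order of first occurrence *)
Fixpoint canon_from (n : nat) (s : seq nat) : bool :=
  match s with
  | [::] => true
  | k :: s' => (k <= n) && canon_from (maxn n k.+1) s'
  end.

Definition canonical (A : pabs) : bool := canon_from 0 (avars A).

(** One expansion step  A -> A'  at an arbitrary hole.
    [d] = number of lambdas enclosing the hole inside the abstraction,
    [nv] = nvars of the whole partial abstraction. *)
Inductive production (d nv : nat) : pabs -> Prop :=
| prod_lam : production d nv (PLam PHole)
| prod_app : production d nv (PApp PHole PHole)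
| prod_var i : i < d -> production d nv (PVar i)
| prod_prim t : production d nv (PPrim t)
| prod_avar k : k <= nv -> production d nv (PAVar k).

Inductive expand_at (d nv : nat) : pabs -> pabs -> Prop :=
| ex_hole p : production d nv p -> expand_at d nv PHole p
| ex_lam b b' : expand_at d.+1 nv b b' -> expand_at d nv (PLam b) (PLam b')
| ex_appl a a' b : expand_at d nv a a' -> expand_at d nv (PApp a b) (PApp a' b)
| ex_appr a b b' : expand_at d nv b b' -> expand_at d nv (PApp a b) (PApp a b').

Definition expand (A A' : pabs) : Prop := expand_at 0 (nvars A) A A'.

Inductive derivable : pabs -> pabs -> Prop :=
| der_refl A : derivable A A
| der_step A B C : expand A B -> derivable B C -> derivable A C.

Definition inS (bound : nat) (A : pabs) : Prop :=
  [/\ complete A, pscoped 0 A, canonical A & psize A <= bound].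

Definition corpus_bound (P : seq term) : nat := \max_(p <- P) tsize p.

(** Expansion performed by the search: all ways of filling the leftmost
    (first in preorder) hole. *)
Definition fills (d nv : nat) : seq pabs :=
  [:: PLam PHole; PApp PHole PHole] ++ map PVar (iota 0 d)
    ++ map PPrim (enum T) ++ map PAVar (iota 0 nv.+1).

Fixpoint expl (d nv : nat) (A : pabs) : seq pabs :=
  match A with
  | PHole => fills d nv
  | PLam b => map PLam (expl d.+1 nv b)
  | PApp a b =>
      if complete a then map (PApp a) (expl d nv b)
      else map (fun a' => PApp a' b) (expl d nv a)
  | _ => [::]
  end.

Definition children (bound : nat) (A : pabs) : seq pabs :=
  [seq c <- expl 0 (nvars A) A | psize c <= bound].

Section Search.
Variable R : realType.
Variable U : pabs -> R.
Variable bound : nat.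

Definition covers (A2 A1 : pabs) : Prop := (U A1 < U A2)%R.

Definition strictly_dominates (H2 H1 : pabs) : Prop :=
  forall A1, inS bound A1 -> derivable H1 A1 ->
    exists2 A2, inS bound A2 & derivable H2 A2 /\ covers A2 A1.

Record state := State { queue : seq pabs; best : option pabs }.

Definition update (b : option pabs) (c : pabs) : option pabs :=
  match b with
  | None => Some c
  | Some a => if (U a < U c)%R then Some c else Some a
  end.

Definition init_state : state := State [:: PHole] None.

Inductive step : state -> state -> Prop :=
| step_expand A q b :
    step (State (A :: q) b)
         (State (q ++ [seq c <- children bound A | ~~ complete c])
                (foldl update b [seq c <- children bound A | complete c]))
| step_prune A q b :
    (exists H, strictly_dominates H A) ->
    step (State (A :: q) b) (State q b).

Inductive reachable : state -> Prop :=
| reach_init : reachable init_state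
| reach_step s s' : reachable s -> step s s' -> reachable s'.

End Search.
End Defs.

(* Since S is finite (it lies in the search tree below ??) and nonempty, fix an
   optimal A* in S. Expanding always the leftmost hole, the search generates every
   element of S from any queued partial abstraction that it instantiates; the
   invariant is that either some queued node generates A*, or the best abstraction
   found so far is at least as good as A*. A node generating A* is never pruned: a
   dominating partial abstraction would derive some A'' in S with U A'' > U A*.
   Termination: each step strictly decreases the total number of nodes of the search
   subtrees of the queued partial abstractions. *)

From HB Require Import structures.
From mathcomp Require Import all_boot all_order all_algebra.
From mathcomp Require Import reals.
From mathcomp Require Import zify.
Import Order.TTheory.

Set Implicit Arguments.
Unset Strict Implicit.
Unset Printing Implicit Defensive.

Section PabsEq.
Variable T : finType.

Fixpoint pabs_eqb (a b : pabs T) : bool :=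
  match a, b with
  | PHole, PHole => true
  | PLam a, PLam b => pabs_eqb a b
  | PApp a1 a2, PApp b1 b2 => pabs_eqb a1 b1 && pabs_eqb a2 b2
  | PVar i, PVar j => i == j
  | PPrim t, PPrim u => t == u
  | PAVar i, PAVar j => i == j
  | _, _ => false
  end.

Lemma pabs_eqP : Equality.axiom pabs_eqb.
Proof.
elim=> [|a IH|a1 IH1 a2 IH2|i|t|i] [|b|b1 b2|j|u|j] /=; try by constructor.
- by apply: (iffP (IH b)) => [->|[]].
- by apply: (iffP andP) => [[/IH1-> /IH2->]|[<- <-]]; split; [apply/IH1|apply/IH2].
- by apply: (iffP eqP) => [->|[]].
- by apply: (iffP eqP) => [->|[]].
- by apply: (iffP eqP) => [->|[]].
Qed.

End PabsEq.

HB.instance Definition _ (T : finType) := hasDecEq.Build (pabs T) (@pabs_eqP T).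

Lemma seq_argmax disp (X : eqType) (Y : orderType disp) (f : X -> Y) (l : seq X) x0 :
  x0 \in l -> exists2 x, x \in l & forall y, y \in l -> (f y <= f x)%O.
Proof.
elim: l x0 => // x l IH x0 _; case: l IH => [|y l] IH.
  by exists x => [|z]; rewrite ?mem_head // inE => /eqP->.
have [z hz zmax] := IH y (mem_head _ _).
have [hxz|hzx] := leP (f x) (f z).
- exists z => [|w]; first by rewrite inE hz orbT.
  by rewrite inE => /orP[/eqP->|/zmax].
- exists x => [|w]; first exact: mem_head.
  by rewrite inE => /orP[/eqP->//|/zmax /le_trans]; apply; apply: ltW.
Qed.

Lemma sum_cat_lt_cons (I : Type) (F : I -> nat) x s r :
  \sum_(i <- r) F i < F x -> \sum_(i <- s ++ r) F i < \sum_(i <- x :: s) F i.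
Proof. by rewrite big_cons big_cat /= addnC ltn_add2r. Qed.

Section Expansion.
Variable T : finType.
Local Notation pabs := (pabs T).

Fixpoint nfilled (A : pabs) : nat :=
  match A with
  | PHole => 0
  | PLam b => (nfilled b).+1
  | PApp a b => (nfilled a + nfilled b).+1
  | _ => 1
  end.

Lemma nfilled_le_psize (A : pabs) : nfilled A <= psize A.
Proof. by elim: A => //= [a IHa b IHb]; rewrite ltnS leq_add. Qed.

Lemma fillsP d nv (c : pabs) : reflect (production d nv c) (c \in fills T d nv).
Proof.
rewrite /fills !mem_cat mem_seq2; apply: (iffP idP).
- case/orP=> [/orP[]/eqP->|/orP[/mapP[i + ->]|/orP[/mapP[t _ ->]|/mapP[k + ->]]]];
    rewrite ?mem_iota => *; constructor; lia.
- case=> [||i hi|t|k hk]; rewrite ?eqxx //.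
  + by rewrite map_f ?orbT // mem_iota.
  + by rewrite map_f ?orbT // mem_enum.
  + by rewrite [_ \in map (PAVar T) _]map_f ?orbT // mem_iota; lia.
Qed.

Lemma expand_at_nfilled d nv (A c : pabs) :
  expand_at d nv A c -> nfilled c = (nfilled A).+1.
Proof.
by elim=> {d nv A c} [? ? ? []|? ? ? ? _ /= ->|? ? ? ? ? _ /= ->|? ? ? ? ? _ /= ->] //=;
  lia.
Qed.

Lemma expand_at_scoped d nv (A c : pabs) :
  expand_at d nv A c -> pscoped d A -> pscoped d c.
Proof.
elim=> {d nv A c} [? ? ? [] //|? ? ? ? _ IH /= /IH //|? ? ? ? ? _ IH|? ? ? ? ? _ IH] /=.
- by case/andP=> /IH-> ->.
- by case/andP=> -> /IH.
Qed.

Lemma expl_expand d nv (A c : pabs) : c \in expl d nv A -> expand_at d nv A c.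
Proof.
elim: A d c => [|b IH|a IHa b IHb|i|t|i] d c //=.
- by move/fillsP; constructor.
- by case/mapP=> c' /IH h ->; constructor.
- by case: (complete a) => /mapP[c' h ->]; constructor; [apply: IHb|apply: IHa].
Qed.

Lemma expl_complete d nv (A : pabs) : complete A -> expl d nv A = [::].
Proof.
elim: A d => //= [b IH|a IHa b IHb] d; first by move=> /IH ->.
by case/andP=> -> /IHb ->.
Qed.

(* Since the search always fills the leftmost hole, a fresh abstraction variable
   placed there is the last one in preorder, which keeps children canonical. *)
Fixpoint avars_before_hole (A : pabs) : bool :=
  match A with
  | PLam b => avars_before_hole b
  | PApp a b =>
      if complete a then avars_before_hole b
      else avars_before_hole a && (avars b == [::])
  | _ => true
  end.

Lemma avars_before_hole_nil (A : pabs) : avars A = [::] -> avars_before_hole A.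
Proof.
elim: A => //= a IHa b IHb; case: (avars a) IHa => // /(_ erefl) ha /= hb.
by case: (complete a); rewrite ?IHb ?ha ?hb.
Qed.

Lemma expl_avars_before_hole d nv (A c : pabs) :
  c \in expl d nv A -> avars_before_hole A -> avars_before_hole c.
Proof.
elim: A d c => [|b IH|a IHa b IHb|i|t|i] d c //=.
- by case/fillsP.
- by case/mapP=> c' /IH h -> /h.
- case ca: (complete a) => /mapP[c' hc' ->] /=; rewrite ?ca; first exact: IHb hc'.
  move=> /andP[/(IHa _ _ hc') ha /eqP hb].
  by case: (complete c'); [apply: avars_before_hole_nil | rewrite ha hb].
Qed.

Lemma expl_avars d nv (A c : pabs) :
  c \in expl d nv A -> avars_before_hole A ->
  avars c = avars A \/ exists2 k, k <= nv & avars c = rcons (avars A) k.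
Proof.
elim: A d c => [|b IH|a IHa b IHb|i|t|i] d c //=.
- by case/fillsP=> [||i|t|k hk] _; [left..|right; exists k].
- by case/mapP=> c' /IH h -> /h.
- case: (complete a) => /mapP[c' hc' ->] /=.
    by case/(IHb _ _ hc') => [->|[k hk ->]]; [left|right; exists k => //; rewrite rcons_cat].
  case/andP=> /(IHa _ _ hc') [->|[k hk ->]] /eqP ->; rewrite !cats0; first by left.
  by right; exists k.
Qed.

Lemma nvars_avars (A : pabs) : nvars A = \max_(k <- avars A) k.+1.
Proof.
by elim: A => /= [|b ->|a -> b ->|i|t|k]; rewrite ?big_nil ?big_cat ?big_seq1.
Qed.

Lemma canon_from_cat n s t :
  canon_from n (s ++ t) = canon_from n s && canon_from (maxn n (\max_(k <- s) k.+1)) t.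
Proof.
elim: s n => [|k s IH] n /=; first by rewrite big_nil maxn0.
by rewrite IH big_cons maxnA andbA.
Qed.

Lemma expl_canonical (A c : pabs) :
  c \in expl 0 (nvars A) A -> avars_before_hole A -> canonical A -> canonical c.
Proof.
rewrite /canonical => /expl_avars h /h [->|[k hk ->]] // cA.
by rewrite -cats1 canon_from_cat cA max0n -nvars_avars /= hk.
Qed.

Fixpoint matches (Q A : pabs) : bool :=
  match Q, A with
  | PHole, _ => true
  | PLam q, PLam a => matches q a
  | PApp q1 q2, PApp a1 a2 => matches q1 a1 && matches q2 a2
  | _, _ => Q == A
  end.

Lemma matches_refl (A : pabs) : matches A A.
Proof. by elim: A => //= [a1 -> a2 ->]. Qed.

Lemma matches_complete (Q A : pabs) : matches Q A -> complete Q -> Q = A.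
Proof.
elim: Q A => [|q IH|q1 IH1 q2 IH2|i|t|i] [|a|a1 a2|j|u|j] //=; try by move/eqP.
- by move=> /IH h /h ->.
- by case/andP=> /IH1 h1 /IH2 h2 /andP[/h1 -> /h2 ->].
Qed.

Lemma matches_psize (Q A : pabs) : matches Q A -> psize Q <= psize A.
Proof.
elim: Q A => [|q IH|q1 IH1 q2 IH2|i|t|i] [|a|a1 a2|j|u|j] //=; try by move/eqP=> ->.
- exact: IH.
- by case/andP=> /IH1 h1 /IH2 h2; rewrite ltnS leq_add.
Qed.

Lemma fills_matches d nv m (A : pabs) :
  complete A -> pscoped d A -> canon_from m (avars A) -> m <= nv ->
  exists2 c, c \in fills T d nv & matches c A.
Proof.
case: A => [|a|a1 a2|j|u|j] //= _ hd hc hnv.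
- by exists (PLam (PHole T)); first by apply/fillsP; constructor.
- by exists (PApp (PHole T) (PHole T)); first by apply/fillsP; constructor.
- by exists (PVar T j); [apply/fillsP; constructor|rewrite matches_refl].
- by exists (PPrim u); [apply/fillsP; constructor|rewrite matches_refl].
- exists (PAVar T j); last by rewrite matches_refl.
  by apply/fillsP; constructor; move: hc => /andP[hj _]; apply: leq_trans hnv.
Qed.

(* [m] is the number of abstraction variables introduced to the left of [Q]. *)
Lemma expl_matches d nv m (Q A : pabs) :
  matches Q A -> complete A -> ~~ complete Q -> pscoped d A ->
  canon_from m (avars A) -> maxn m (nvars Q) <= nv ->
  exists2 c, c \in expl d nv Q & matches c A.
Proof.
elim: Q A d m => [|q IH|q1 IH1 q2 IH2|i|t|i] A d m //=.
- by rewrite maxn0 => _ ca _; apply: fills_matches.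
- case: A => // a /= ma ca cq sa cn hnv.
  by have [c hc mc] := IH a d.+1 m ma ca cq sa cn hnv; exists (PLam c); rewrite ?map_f.
- case: A => // a1 a2 /andP[m1 m2] /andP[ca1 ca2] cq /andP[sa1 sa2].
  rewrite canon_from_cat -nvars_avars => /andP[cn1 cn2] hnv.
  case cq1: (complete q1).
  + move: cq hnv; rewrite cq1 (matches_complete m1 cq1) => cq2 hnv.
    have [|c hc mc] := IH2 a2 d (maxn m (nvars a1)) m2 ca2 cq2 sa2 cn2.
      by rewrite -maxnA.
    by exists (PApp a1 c); rewrite ?map_f //= matches_refl.
  + have [|c hc mc] := IH1 a1 d m m1 ca1 (negbT cq1) sa1 cn1.
      by apply: leq_trans hnv; rewrite maxnA leq_maxl.
    by exists (PApp c q2); rewrite ?map_f //= mc.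
Qed.

End Expansion.

Section SearchTree.
Variables (T : finType) (bound : nat).
Local Notation pabs := (pabs T).
Local Notation children := (children bound).

Lemma mem_children (A c : pabs) :
  c \in children A -> expand A c /\ psize c <= bound.
Proof. by rewrite mem_filter => /andP[? /expl_expand]. Qed.

Lemma children_complete (A : pabs) : complete A -> children A = [::].
Proof. by move=> cA; rewrite /children expl_complete. Qed.

Definition wf_pabs (A : pabs) := [&& pscoped 0 A, canonical A & avars_before_hole A].

Lemma children_wf (A c : pabs) : wf_pabs A -> c \in children A -> wf_pabs c.
Proof.
case/and3P=> sA nA bA; rewrite mem_filter => /andP[_ hc]; apply/and3P; split.
- exact: expand_at_scoped (expl_expand hc) sA.
- exact: expl_canonical hc bA nA.
- exact: expl_avars_before_hole hc bA.
Qed.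

Lemma complete_child_inS (A c : pabs) :
  wf_pabs A -> c \in children A -> complete c -> inS bound c.
Proof.
move=> wA hc cc; have /and3P[sc nc _] := children_wf wA hc.
by split=> //; case/mem_children: hc.
Qed.

Inductive generates : pabs -> pabs -> Prop :=
| gen_refl A : generates A A
| gen_child A c B : c \in children A -> generates c B -> generates A B.

Lemma generates_derivable (A B : pabs) : generates A B -> derivable A B.
Proof.
elim=> [|{}A c {}B /mem_children[hc _] _]; first exact: der_refl.
exact: der_step.
Qed.

Lemma generates_complete (A B : pabs) : generates A B -> complete A -> A = B.
Proof. by case=> // {}A c {}B hc _ /children_complete cA; rewrite cA in hc. Qed.

Lemma generates_inv (A B : pabs) : generates A B -> A <> B ->
  exists2 c, c \in children A & generates c B.
Proof. by case=> [{}A /(_ erefl)|{}A c {}B hc hB _]; last exists c. Qed.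

Lemma children_nfilled (A c : pabs) : c \in children A -> nfilled c = (nfilled A).+1.
Proof. by case/mem_children=> /expand_at_nfilled. Qed.

Lemma matches_child (Q A : pabs) : inS bound A -> matches Q A -> ~~ complete Q ->
  exists2 c, c \in children Q & matches c A.
Proof.
case=> cA sA nA bA mQ ncQ.
have [|c hc mc] := @expl_matches _ 0 (nvars Q) 0 Q A mQ cA ncQ sA nA; first by rewrite max0n.
exists c => //; rewrite mem_filter hc andbT.
exact: leq_trans (matches_psize mc) bA.
Qed.

Lemma generates_of_matches (Q A : pabs) :
  inS bound A -> matches Q A -> generates Q A.
Proof.
move=> hA; have [n] := ubnP (psize A - nfilled Q); elim: n Q => // n IH Q hn mQ.
have [cQ|ncQ] := boolP (complete Q).
  by rewrite (matches_complete mQ cQ); apply: gen_refl.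
have [c hc mc] := matches_child hA mQ ncQ.
have := children_nfilled hc; have := nfilled_le_psize c; have := matches_psize mc.
by move=> *; apply: gen_child hc (IH _ _ mc); lia.
Qed.

Definition height (A : pabs) : nat := bound - nfilled A.

Lemma children_height (A c : pabs) : c \in children A -> height c < height A.
Proof.
case/mem_children=> /expand_at_nfilled hc hb; rewrite /height.
by have := nfilled_le_psize c; lia.
Qed.

(* Any fuel above [height A] gives the whole search tree below [A]; the value
   [[::]] at fuel [0] is never reached from [tree]. *)
Fixpoint subtree (fuel : nat) (A : pabs) : seq pabs :=
  if fuel is f.+1 then A :: flatten [seq subtree f c | c <- children A] else [::].

Lemma subtree_fuel f g (A : pabs) :
  height A < f -> height A < g -> subtree f A = subtree g A.
Proof.
elim: f g A => [|f IH] [|g] A //= hf hg; congr (_ :: flatten _).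
apply/eq_in_map=> c /children_height hc; apply: IH; lia.
Qed.

Definition tree (A : pabs) : seq pabs := subtree (height A).+1 A.

Lemma tree_unfold (A : pabs) :
  tree A = A :: flatten [seq tree c | c <- children A].
Proof.
rewrite {1}/tree; congr (_ :: flatten _).
by apply/eq_in_map=> c /children_height hc; apply: subtree_fuel.
Qed.

Lemma size_tree (A : pabs) :
  size (tree A) = (\sum_(c <- children A) size (tree c)).+1.
Proof. by rewrite tree_unfold /= size_flatten sumnE !big_map. Qed.

Lemma generates_tree (A B : pabs) : generates A B -> B \in tree A.
Proof.
elim=> [{}A|{}A c {}B hc _ IH]; rewrite tree_unfold inE ?eqxx //.
by apply/orP; right; apply/flatten_mapP; exists c.
Qed.

End SearchTree.

Section Search.
Variables (T : finType) (R : realType) (U : pabs T -> R) (bound : nat).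
Local Notation pabs := (pabs T).
Local Notation state := (state T).
Local Notation step := (step U bound).
Local Notation reachable := (reachable U bound).

Definition work (s : state) : nat := \sum_(Q <- queue s) size (tree bound Q).

Lemma step_work (s s' : state) : step s s' -> work s' < work s.
Proof.
rewrite /work; case=> [A q b|A q b _].
  apply: sum_cat_lt_cons; rewrite big_filter size_tree ltnS big_mkcond.
  by apply: leq_sum => c _; case: ifP.
by rewrite -{1}[q]cats0; apply: sum_cat_lt_cons; rewrite big_nil tree_unfold.
Qed.

Lemma step_acc (s : state) : Acc (fun s' s => step s s') s.
Proof.
have [n] := ubnP (work s); elim: n s => [|n IH] s hs; first by rewrite ltn0 in hs.
by constructor=> s' /step_work hs'; apply: IH; lia.
Qed.

Lemma update_ge (b : option pabs) c x : b = Some x \/ x = c ->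
  exists2 y, update U b c = Some y & (U x <= U y)%R.
Proof.
case: b => [a|] /= hx; last by case: hx => // ->; exists c.
case: ifP => hac; [exists c | exists a] => //; case: hx => [[<-]|->] //.
- exact: ltW.
- by rewrite leNgt hac.
Qed.

Lemma foldl_update_ge (b : option pabs) l x : b = Some x \/ x \in l ->
  exists2 B, foldl (update U) b l = Some B & (U x <= U B)%R.
Proof.
elim: l b x => [|c l IH] b x /= hx; first by case: hx => // ->; exists x.
case: hx => [hb|]; last rewrite inE => /orP[/eqP xc|xl]; last exact: IH _ _ (or_intror xl).
all: have [y hy hxy] : exists2 y, update U b c = Some y & (U x <= U y)%R
  by apply: update_ge; auto.
all: have [B hB hyB] := IH _ y (or_introl hy).
all: by exists B => //; apply: le_trans hxy hyB.
Qed.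

Lemma foldl_update_in (b : option pabs) l B :
  foldl (update U) b l = Some B -> b = Some B \/ B \in l.
Proof.
elim: l b => [|c l IH] b /=; first by left.
move/IH => [|hB]; last by right; rewrite inE hB orbT.
case: b => [a|] /=; last by case=> <-; right; rewrite mem_head.
by case: ifP => _ [<-]; [right; rewrite mem_head | left].
Qed.

Lemma reachable_queue_wf (s : state) : reachable s ->
  {in queue s, forall Q, wf_pabs Q && ~~ complete Q}.
Proof.
elim=> [|{}s s' _ IH hst]; first by move=> Q; rewrite inE => /eqP->.
case: hst IH => [A q b|A q b _] IH Q; last by move=> hQ; apply: IH; rewrite inE hQ orbT.
rewrite mem_cat mem_filter => /orP[hQ|/andP[-> hc]]; first by apply: IH; rewrite inE hQ orbT.
have /andP[wA _] := IH A (mem_head _ _).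
by rewrite (children_wf wA hc).
Qed.

Lemma reachable_best_inS (s : state) B : reachable s -> best s = Some B -> inS bound B.
Proof.
move=> hs; elim: hs B => [|{}s s' hs IH hst] B //.
case: hst hs IH => [A q b|A q b _] hs IH /=; last exact: IH.
case/foldl_update_in => [/IH //|]; rewrite mem_filter => /andP[cB hB].
have /andP[wA _] := reachable_queue_wf hs (mem_head _ _).
exact: complete_child_inS wA hB cB.
Qed.

Lemma exists_optimum (A0 : pabs) : inS bound A0 ->
  exists2 Astar, inS bound Astar & forall A, inS bound A -> (U A <= U Astar)%R.
Proof.
pose inSb (A : pabs) := [&& complete A, pscoped 0 A, canonical A & psize A <= bound].
have memS A : inS bound A -> A \in [seq B <- tree bound (PHole T) | inSb B].
  move=> hA; rewrite mem_filter; apply/andP; split; first exact/and4P.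
  by apply/generates_tree/generates_of_matches.
move=> /memS /(seq_argmax U)[Astar]; rewrite mem_filter => /andP[/and4P hS _] hmax.
by exists Astar => // A /memS /hmax.
Qed.

Section Optimum.
Variable Astar : pabs.
Hypothesis Astar_inS : inS bound Astar.
Hypothesis Astar_max : forall A, inS bound A -> (U A <= U Astar)%R.

Lemma reachable_keeps_optimum (s : state) : reachable s ->
  (exists2 Q, Q \in queue s & generates bound Q Astar) \/
  exists2 B, best s = Some B & (U Astar <= U B)%R.
Proof.
elim=> [|{}s s' hs IH hst].
  by left; exists (PHole T); rewrite ?mem_head //; apply: generates_of_matches.
case: hst hs IH => [A q b|A q b [H dom]] hs /= [[Q hQ hQA]|[B hB le_B]].
- move: hQ; rewrite inE => /orP[/eqP eQ|hQ]; last by left; exists Q; rewrite // mem_cat hQ.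
  subst Q; have /andP[_ ncA] := reachable_queue_wf hs (mem_head _ _).
  have [c hc hcA] : exists2 c, c \in children bound A & generates bound c Astar.
    by apply: generates_inv hQA _ => eA; case: Astar_inS => cAs _ _ _; rewrite eA cAs in ncA.
  have [cc|ncc] := boolP (complete c).
  + right; rewrite -(generates_complete hcA cc).
    by apply: foldl_update_ge; right; rewrite mem_filter cc.
  + by left; exists c => //; rewrite mem_cat mem_filter ncc hc orbT.
- right; case: (foldl_update_ge (l := [seq c <- children bound A | complete c]) (or_introl hB)).
  by move=> B' hB' le; exists B' => //; apply: le_trans le_B le.
- move: hQ; rewrite inE => /orP[/eqP eQ|hQ]; last by left; exists Q.
  subst Q; have [A2 hA2 [_ lt]] := dom Astar Astar_inS (generates_derivable hQA).
  by move: (Astar_max hA2); rewrite leNgt lt.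
- by right; exists B.
Qed.

End Optimum.

End Search.

Lemma corpus_bound_gt0 (T : finType) (P : seq (term T)) :
  P <> [::] -> 0 < corpus_bound P.
Proof.
case: P => // p P _; rewrite /corpus_bound big_cons.
by apply: leq_trans (leq_maxl _ _); case: p.
Qed.

Local Open Scope ring_scope.

Theorem lemma3p1 (T : finType) (R : realType) (P : seq (term T))
    (U : pabs T -> R) :
  P <> [::] -> all (@tclosed T) P ->
  (* the search always terminates ... *)
  Acc (fun s' s => step U (corpus_bound P) s s') (init_state T) /\
  (* ... and whenever it stops (empty queue), it has found an optimum of S *)
  (forall s, reachable U (corpus_bound P) s -> queue s = [::] ->
     exists A, best s = Some A /\ inS (corpus_bound P) A /\
       forall A', inS (corpus_bound P) A' -> U A' <= U A).
Proof.
move=> /corpus_bound_gt0 bound_gt0 _; split; first exact: step_acc.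
move=> s hs hq.
have [Astar hS hmax] := exists_optimum U (A0 := PAVar T 0) (And4 erefl erefl erefl bound_gt0).
case: (reachable_keeps_optimum hS hmax hs) => [[Q]|[B hB le_B]]; first by rewrite hq.
exists B; split=> //; split; first exact: reachable_best_inS hs hB.
by move=> A /hmax /le_trans; apply.
Qed.
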